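(* Let $A\overset{i}{\to}U\overset{j}{\to}S$ be an extension of a semilattice of groups $A$ by an inverse semigroup $S$, let $\rho,\rho'$ be transversals of $j$, and let $\Lambda=(\alpha,\lambda,f)$, $\Lambda'=(\alpha',\lambda',f')$ be the twisted $S$-module structures on $A$ induced by $\rho$ and $\rho'$ respectively. Then there is a function $g:S\to A$ with $g(s)\in A_{\alpha(ss^{-1})}$ for all $s$ such that (i) $\alpha'=\alpha$; (ii) $\lambda'_s=\xi_{g(s)}\circ\lambda_s$ for all $s\in S$; (iii) $f'(s,t)g(st)=g(s)\lambda_s(g(t))f(s,t)$ for all $s,t\in S$.
   Context: A semilattice of groups is an inverse semigroup $A$ whose idempotents are central; $A_e=\{a: aa^{-1}=a^{-1}a=e\}$ for $e\in E(A)$. An extension of $A$ by $S$ is an inverse semigroup $U$ with a monomorphism $i:A\to U$ and an idempotent-separating epimorphism $j:U\to S$ with $i(A)=j^{-1}(E(S))$. A transversal of $j$ is a map $\rho:S\to U$ with $j\circ\rho=\mathrm{id}_S$ and $\rho(E(S))\subseteq E(U)$. The twisted $S$-module structure induced by $\rho$ is $(\alpha,\lambda,f)$ where $\alpha=i^{-1}\circ\rho|_{E(S)}:E(S)\to E(A)$, $\lambda_s(a)=i^{-1}(\rho(s)i(a)\rho(s)^{-1})$ for $s\in S,a\in A$, and $f(s,t)$ is the unique element of $A_{\alpha(stt^{-1}s^{-1})}$ with $\rho(s)\rho(t)=i(f(s,t))\rho(st)$. For $b\in A$, $\xi_b$ is the inner endomorphism $\xi_b(a)=bab^{-1}$. 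*)

Record InvSemigroup := {
  carrier :> Type;
  smul : carrier -> carrier -> carrier;
  sinv : carrier -> carrier;
  smulA : forall x y z, smul x (smul y z) = smul (smul x y) z;
  smul_inv_mul : forall x, smul (smul x (sinv x)) x = x;
  sinv_mul_inv : forall x, smul (smul (sinv x) x) (sinv x) = sinv x;
  sidem_comm : forall e f, smul e e = e -> smul f f = f -> smul e f = smul f e
}.

Arguments smul {_} _ _.
Arguments sinv {_} _.

Definition idempotent {X : InvSemigroup} (e : X) : Prop := smul e e = e.

Definition semilattice_of_groups (A : InvSemigroup) : Prop :=
  forall e a : A, idempotent e -> smul e a = smul a e.

Definition in_group_at {A : InvSemigroup} (e a : A) : Prop :=
  smul a (sinv a) = e /\ smul (sinv a) a = e.

Definition is_hom {X Y : InvSemigroup} (h : X -> Y) : Prop :=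
  forall x y, h (smul x y) = smul (h x) (h y).

Definition is_extension {A U S : InvSemigroup} (i : A -> U) (j : U -> S) : Prop :=
  (is_hom i /\ (forall a b, i a = i b -> a = b)) /\
  (is_hom j /\ (forall s, exists u, j u = s)) /\
  (forall e f : U, idempotent e -> idempotent f -> j e = j f -> e = f) /\
  (forall u : U, (exists a, i a = u) <-> idempotent (j u)).

Definition is_transversal {U S : InvSemigroup} (j : U -> S) (rho : S -> U) : Prop :=
  (forall s, j (rho s) = s) /\ (forall e : S, idempotent e -> idempotent (rho e)).

Definition xi {A : InvSemigroup} (b : A) : A -> A := fun a => smul (smul b a) (sinv b).

(* (alpha, lambda, f) is the twisted S-module structure induced by rho.
   alpha is a total function S -> A of which only the restriction to E(S)
   is meaningful; it is characterised by i (alpha e) = rho e on E(S). *)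
Definition induced_structure {A U S : InvSemigroup} (i : A -> U) (rho : S -> U)
    (alpha : S -> A) (lambda : S -> A -> A) (f : S -> S -> A) : Prop :=
  (forall e : S, idempotent e -> i (alpha e) = rho e) /\
  (forall s a, i (lambda s a) = smul (smul (rho s) (i a)) (sinv (rho s))) /\
  (forall s t,
      in_group_at (alpha (smul (smul (smul s t) (sinv t)) (sinv s))) (f s t) /\
      smul (rho s) (rho t) = smul (i (f s t)) (rho (smul s t))).

(** Both transversals pick, over each [s], an element of the fibre [j^-1 s];
    two elements [u], [v] of the same fibre have the same domain idempotent
    [u^-1 u = v^-1 v], because [j] separates idempotents.  Hence
    [g s := i^-1 (rho' s (rho s)^-1)] is well defined, lies in
    [A_(alpha (s s^-1))], and satisfies [rho' s = i (g s) rho s].  Substituting this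
    into the defining equations of [lambda'] and [f'] gives (ii) and (iii);
    (i) holds because both transversals map idempotents to the unique
    idempotent of their fibre. *)

From Stdlib Require Import FunctionalExtensionality ClassicalEpsilon.

Local Infix "·" := smul (at level 40, left associativity).
Local Notation "x ⁻¹" := (sinv x) (at level 2, left associativity, format "x ⁻¹").

Section InverseSemigroupTheory.
Variable X : InvSemigroup.
Implicit Types w x y : X.

Lemma idempotent_mul_sinv x : idempotent (x · x⁻¹).
Proof. unfold idempotent. rewrite smulA, smul_inv_mul. reflexivity. Qed.

Lemma idempotent_sinv_mul x : idempotent (x⁻¹ · x).
Proof. unfold idempotent. rewrite smulA, sinv_mul_inv. reflexivity. Qed.

Lemma mul_sinv_mulK w x : w · x · x⁻¹ · x = w · x.
Proof. rewrite <- !smulA, (smulA _ x), smul_inv_mul. reflexivity. Qed.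

Lemma sinv_mul_sinvK w x : w · x⁻¹ · x · x⁻¹ = w · x⁻¹.
Proof. rewrite <- !smulA, (smulA _ x⁻¹), sinv_mul_inv. reflexivity. Qed.

Lemma sinv_unique x y : x · y · x = x -> y · x · y = y -> y = x⁻¹.
Proof.
  intros xyx yxy.
  assert (Iyx : idempotent (y · x)).
  { unfold idempotent. rewrite smulA, yxy. reflexivity. }
  assert (Ixy : idempotent (x · y)).
  { unfold idempotent. rewrite smulA, xyx. reflexivity. }
  assert (Ey : y = x⁻¹ · x · y).
  { transitivity (y · x · (x⁻¹ · x) · y).
    - rewrite !smulA, mul_sinv_mulK, yxy. reflexivity.
    - rewrite (sidem_comm _ _ _ Iyx (idempotent_sinv_mul x)), <- smulA, yxy.
      reflexivity. }
  assert (Ex : x⁻¹ = x⁻¹ · x · y).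
  { transitivity (x⁻¹ · (x · y · (x · x⁻¹))).
    - rewrite (smulA _ (x · y)), xyx, smulA, sinv_mul_inv. reflexivity.
    - rewrite (sidem_comm _ _ _ Ixy (idempotent_mul_sinv x)), !smulA, sinv_mul_inv.
      reflexivity. }
  rewrite Ey, <- Ex. reflexivity.
Qed.

Lemma sinv_mul x y : (x · y)⁻¹ = y⁻¹ · x⁻¹.
Proof.
  symmetry. apply sinv_unique.
  - transitivity (x · (y · y⁻¹ · (x⁻¹ · x)) · y).
    + rewrite !smulA. reflexivity.
    + rewrite (sidem_comm _ _ _ (idempotent_mul_sinv y) (idempotent_sinv_mul x)).
      rewrite !smulA, smul_inv_mul, mul_sinv_mulK. reflexivity.
  - transitivity (y⁻¹ · (x⁻¹ · x · (y · y⁻¹)) · x⁻¹).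
    + rewrite !smulA. reflexivity.
    + rewrite <- (sidem_comm _ _ _ (idempotent_mul_sinv y) (idempotent_sinv_mul x)).
      rewrite !smulA, sinv_mul_inv, sinv_mul_sinvK. reflexivity.
Qed.

Lemma sinvK x : x⁻¹⁻¹ = x.
Proof. symmetry. apply sinv_unique; [apply sinv_mul_inv | apply smul_inv_mul]. Qed.

Section SameDomain.
Variables u v : X.
Hypothesis same_domain : u⁻¹ · u = v⁻¹ · v.

Lemma mul_sinv_mul_sinv_same_domain : u · v⁻¹ · (u · v⁻¹)⁻¹ = u · u⁻¹.
Proof.
  rewrite sinv_mul, sinvK, smulA, <- (smulA _ u v⁻¹ v), <- same_domain.
  rewrite smulA, smul_inv_mul. reflexivity.
Qed.

Lemma sinv_mul_sinv_mul_same_domain : (u · v⁻¹)⁻¹ · (u · v⁻¹) = v · v⁻¹.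
Proof.
  rewrite sinv_mul, sinvK, smulA, <- (smulA _ v u⁻¹ u), same_domain.
  rewrite smulA, smul_inv_mul. reflexivity.
Qed.

Lemma conj_mul_sinv_same_domain x : u · v⁻¹ · (v · x · v⁻¹) · (u · v⁻¹)⁻¹ = u · x · u⁻¹.
Proof.
  rewrite sinv_mul, sinvK, !smulA.
  rewrite <- (smulA _ u v⁻¹ v), <- same_domain, smulA, smul_inv_mul.
  rewrite <- (smulA _ (u · x) v⁻¹ v), <- same_domain, smulA, sinv_mul_sinvK.
  reflexivity.
Qed.

End SameDomain.

End InverseSemigroupTheory.

Lemma hom_sinv (X Y : InvSemigroup) (h : X -> Y) :
  is_hom h -> forall x, h (sinv x) = sinv (h x).
Proof.
  intros h_hom x. apply sinv_unique; rewrite <- !h_hom.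
  - rewrite smul_inv_mul. reflexivity.
  - rewrite sinv_mul_inv. reflexivity.
Qed.

Section Extension.
Variables A U S : InvSemigroup.
Variables (i : A -> U) (j : U -> S).
Hypothesis i_j_extension : is_extension i j.

Lemma extension_hom_i : is_hom i.
Proof. apply i_j_extension. Qed.

Lemma extension_inj_i a b : i a = i b -> a = b.
Proof. apply i_j_extension. Qed.

Lemma extension_hom_j : is_hom j.
Proof. apply i_j_extension. Qed.

Lemma extension_idempotent_eq (e e' : U) :
  idempotent e -> idempotent e' -> j e = j e' -> e = e'.
Proof. apply i_j_extension. Qed.

Lemma extension_sinv_mul_eq (u v : U) : j u = j v -> u⁻¹ · u = v⁻¹ · v.
Proof.
  intro juv. apply extension_idempotent_eq; try apply idempotent_sinv_mul.
  rewrite !extension_hom_j, !(hom_sinv _ _ _ extension_hom_j), juv. reflexivity.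
Qed.

Lemma extension_image_mul_sinv (u v : U) : j u = j v -> exists a, i a = u · v⁻¹.
Proof.
  intro juv. apply i_j_extension.
  rewrite extension_hom_j, (hom_sinv _ _ _ extension_hom_j), juv.
  apply idempotent_mul_sinv.
Qed.

Section Transversal.
Variable rho : S -> U.
Hypothesis rho_transversal : is_transversal j rho.

Lemma transversal_idempotent_eq (u : U) (e : S) :
  idempotent u -> j u = e -> idempotent e -> u = rho e.
Proof.
  intros u_idem <- ju_idem. apply extension_idempotent_eq; auto.
  - apply rho_transversal. exact ju_idem.
  - symmetry. apply rho_transversal.
Qed.

Lemma transversal_mul_sinv (s : S) : rho s · (rho s)⁻¹ = rho (s · s⁻¹).
Proof.
  apply transversal_idempotent_eq; try apply idempotent_mul_sinv.
  rewrite extension_hom_j, (hom_sinv _ _ _ extension_hom_j).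
  rewrite (proj1 rho_transversal). reflexivity.
Qed.

Variables (alpha : S -> A) (lambda : S -> A -> A) (f : S -> S -> A).
Hypothesis rho_structure : induced_structure i rho alpha lambda f.

Lemma induced_sinv_factor (s t : S) : (rho t)⁻¹ · (rho s)⁻¹ · i (f s t) = (rho (s · t))⁻¹.
Proof.
  destruct rho_structure as [alpha_rho [_ f_rho]].
  destruct (f_rho s t) as [[_ f_domain] rho_factor].
  assert (stst : s · t · t⁻¹ · s⁻¹ = s · t · (s · t)⁻¹).
  { rewrite sinv_mul, !smulA. reflexivity. }
  assert (i_domain : (i (f s t))⁻¹ · i (f s t) = rho (s · t) · (rho (s · t))⁻¹).
  { rewrite <- (hom_sinv _ _ _ extension_hom_i), <- extension_hom_i, f_domain.
    rewrite alpha_rho, stst by (rewrite stst; apply idempotent_mul_sinv).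
    symmetry. apply transversal_mul_sinv. }
  rewrite <- sinv_mul, rho_factor, sinv_mul, <- smulA, i_domain.
  rewrite smulA, sinv_mul_inv. reflexivity.
Qed.

End Transversal.

Lemma transversals_agree_on_idempotents (rho rho' : S -> U) (e : S) :
  is_transversal j rho -> is_transversal j rho' -> idempotent e -> rho e = rho' e.
Proof.
  intros rho_tr rho'_tr e_idem. apply transversal_idempotent_eq; auto.
  - apply rho_tr. exact e_idem.
  - apply rho_tr.
Qed.

Section ChangeOfTransversal.
Variables rho rho' : S -> U.
Hypothesis rho_transversal : is_transversal j rho.
Hypothesis rho'_transversal : is_transversal j rho'.
Variables (alpha alpha' : S -> A) (lambda lambda' : S -> A -> A) (f f' : S -> S -> A).
Hypothesis rho_structure : induced_structure i rho alpha lambda f.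
Hypothesis rho'_structure : induced_structure i rho' alpha' lambda' f'.
Variable g : S -> A.
Hypothesis g_def : forall s, i (g s) = rho' s · (rho s)⁻¹.

Lemma same_domain_transversals (s : S) : (rho' s)⁻¹ · rho' s = (rho s)⁻¹ · rho s.
Proof.
  apply extension_sinv_mul_eq.
  rewrite (proj1 rho_transversal), (proj1 rho'_transversal). reflexivity.
Qed.

Lemma change_alpha (e : S) : idempotent e -> alpha' e = alpha e.
Proof.
  intro e_idem. apply extension_inj_i.
  rewrite (proj1 rho_structure), (proj1 rho'_structure); auto.
  symmetry. apply transversals_agree_on_idempotents; auto.
Qed.

Lemma change_in_group_at (s : S) : in_group_at (alpha (s · s⁻¹)) (g s).
Proof.
  pose proof (same_domain_transversals s) as dom.
  assert (i_alpha : i (alpha (s · s⁻¹)) = rho (s · s⁻¹)).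
  { apply rho_structure, idempotent_mul_sinv. }
  split; apply extension_inj_i;
    rewrite extension_hom_i, (hom_sinv _ _ _ extension_hom_i), g_def, i_alpha.
  - rewrite mul_sinv_mul_sinv_same_domain by exact dom.
    rewrite (transversal_mul_sinv rho') by exact rho'_transversal.
    symmetry. apply transversals_agree_on_idempotents; auto.
    apply idempotent_mul_sinv.
  - rewrite sinv_mul_sinv_mul_same_domain by exact dom.
    apply transversal_mul_sinv; auto.
Qed.

Lemma change_lambda (s : S) : lambda' s = (fun a => xi (g s) (lambda s a)).
Proof.
  apply functional_extensionality. intro a. apply extension_inj_i.
  unfold xi. rewrite !extension_hom_i, (hom_sinv _ _ _ extension_hom_i), g_def.
  rewrite (proj1 (proj2 rho_structure)), (proj1 (proj2 rho'_structure)).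
  symmetry. apply conj_mul_sinv_same_domain, same_domain_transversals.
Qed.

Lemma change_factor (s t : S) :
  f' s t · g (s · t) = g s · lambda s (g t) · f s t.
Proof.
  destruct (proj2 (proj2 rho'_structure) s t) as [_ rho'_factor].
  apply extension_inj_i.
  rewrite !extension_hom_i, (proj1 (proj2 rho_structure)), !g_def.
  rewrite smulA, <- rho'_factor.
  rewrite <- (induced_sinv_factor rho rho_transversal alpha lambda f rho_structure s t).
  rewrite <- !smulA, (smulA _ (rho s)⁻¹ (rho s)), <- same_domain_transversals.
  rewrite !smulA, smul_inv_mul. reflexivity.
Qed.

End ChangeOfTransversal.

End Extension.

Theorem proposition3p10 (A U S : InvSemigroup) (i : A -> U) (j : U -> S)
    (rho rho' : S -> U)
    (alpha alpha' : S -> A) (lambda lambda' : S -> A -> A) (f f' : S -> S -> A) :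
  semilattice_of_groups A ->
  is_extension i j ->
  is_transversal j rho ->
  is_transversal j rho' ->
  induced_structure i rho alpha lambda f ->
  induced_structure i rho' alpha' lambda' f' ->
  exists g : S -> A,
    (forall s, in_group_at (alpha (smul s (sinv s))) (g s)) /\
    (forall e : S, idempotent e -> alpha' e = alpha e) /\
    (forall s, lambda' s = (fun a => xi (g s) (lambda s a))) /\
    (forall s t, smul (f' s t) (g (smul s t))
                 = smul (smul (g s) (lambda s (g t))) (f s t)).
Proof.
  intros _ ext rho_tr rho'_tr rho_str rho'_str.
  destruct (choice (fun s a => i a = rho' s · (rho s)⁻¹)) as [g g_def].
  { intro s. apply (extension_image_mul_sinv _ _ _ _ _ ext).
    rewrite (proj1 rho_tr), (proj1 rho'_tr). reflexivity. }
  exists g. split; [|split; [|split]].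
  - intro s. eapply (change_in_group_at _ _ _ _ _ ext rho rho'); eassumption.
  - intro e. eapply (change_alpha _ _ _ _ _ ext rho rho'); eassumption.
  - intro s. eapply (change_lambda _ _ _ _ _ ext rho rho'); eassumption.
  - intros s t. eapply (change_factor _ _ _ _ _ ext rho rho'); eassumption.
Qed.
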